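(* For every $n\ge2$, consider all plane trees on $n$ vertices and, in each, all pairs $(u,w)$ of vertices with $w$ a proper descendant of $u$ (downward paths). Then: - the total number of such pairs is $\frac12\bigl(4^{n-1}-\binom{2n-2}{n-1}\bigr)$; - the total of $d(u,w)$ over all such pairs is $\frac{(2n-3)!}{((n-2)!)^2}$, which also equals $\binom n2 c_{n-1}$. Hence the expected length of a uniformly random downward path in a uniformly random plane tree on $n$ vertices is $$\frac{n-1}{\frac{(2n-2)!!}{(2n-3)!!}-1}=\sqrt{\frac n\pi}+\frac1\pi+O\Bigl(\frac1{\sqrt n}\Bigr).$$
   Context: General (plane) trees are rooted trees in which each vertex may have any number of children, linearly ordered. The size of a tree is its number of vertices. $d(u,w)$ is the number of edges of the path between $u$ and $w$. $c_{m}=\frac1{m+1}\binom{2m}{m}$ is the $m$th Catalan number; $c_{n-1}$ is the number of plane trees on $n$ vertices. The double factorials are $(2m)!!=2\cdot4\cdots(2m)$ and $(2m-1)!!=1\cdot3\cdots(2m-1)$. *)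

From Stdlib Require Import Reals.
From Stdlib Require List.
From mathcomp Require Import all_boot.

Set Implicit Arguments.
Unset Strict Implicit.
Unset Printing Implicit Defensive.

Inductive ptree : Type := Node : seq ptree -> ptree.

(* Vertices of a plane tree, encoded by their address: the sequence of child
   indices along the path from the root (root = [::]). *)
Fixpoint vertices (t : ptree) : seq (seq nat) :=
  match t with
  | Node ts =>
      [::] :: (fix aux (i : nat) (cs : seq ptree) : seq (seq nat) :=
                 match cs with
                 | [::] => [::]
                 | c :: cs' => map (cons i) (vertices c) ++ aux i.+1 cs'
                 end) 0 ts
  end.

Definition tree_size (t : ptree) : nat := size (vertices t).

Definition proper_desc (u w : seq nat) : bool := prefix u w && (u != w).

Definition dist_down (u w : seq nat) : nat := size w - size u.

Definition down_pairs (t : ptree) : seq (seq nat * seq nat) :=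
  [seq uw <- [seq (u, w) | u <- vertices t, w <- vertices t]
     | proper_desc uw.1 uw.2].

Definition npairs (t : ptree) : nat := size (down_pairs t).
Definition sumdist (t : ptree) : nat :=
  sumn [seq dist_down uw.1 uw.2 | uw <- down_pairs t].

Definition catalan (m : nat) : nat := 'C(m.*2, m) %/ m.+1.

Fixpoint dfact (n : nat) : nat :=
  match n with
  | 0 => 1
  | 1 => 1
  | (m.+1 as k).+1 => k.+1 * dfact m
  end.

Open Scope R_scope.

(* expected value of d over a uniformly random (tree, downward path) pair:
   total of d divided by the total number of pairs *)
Definition expected_len (D P : nat) : R := INR D / INR P.

Definition closed_form (n : nat) : R :=
  INR (n - 1) / (INR (dfact (2 * n - 2)) / INR (dfact (2 * n - 3)) - 1).

Close Scope R_scope.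

(* Count a downward path (u, w) at its lower end: a vertex at depth d is the lower end of
   d paths, of total length C(d + 1, 2).  Both totals are thus sums, over all trees with n
   vertices, of a function of the depths.  Building a tree depth-first as a stack of
   forests (a Dyck path of length 2n - 1) turns these totals into Pascal-like recurrences,
   solved by binomial tails: the number of paths is sum_(i >= n) C(2n - 2, i)
   = (4^(n-1) - C(2n - 2, n - 1)) / 2, and their total length is the second tail
   (n - 1) / 2 * C(2n - 2, n - 1).  The asymptotics then follow from Wallis' inequalities
   m pi <= ((2m)!! / (2m - 1)!!)^2 <= (m + 1/2) pi, obtained from the integrals of
   sin^k over [0, pi/2]. *)

From Stdlib Require Import Reals Lra Lia.
From Stdlib Require List Permutation FinFun.
From Coquelicot Require Coquelicot.
From mathcomp Require Import all_boot zify.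
From mathcomp Require ring.

Set Implicit Arguments.
Unset Strict Implicit.
Unset Printing Implicit Defensive.

(** * Downward paths as depth statistics *)

Fixpoint ptree_ind_in (P : ptree -> Prop)
    (IH : forall ts, (forall c, List.In c ts -> P c) -> P (Node ts)) (t : ptree) : P t :=
  let: Node ts := t in
  IH ts ((fix all_in (cs : seq ptree) : forall c, List.In c cs -> P c :=
            match cs with
            | [::] => fun c F => match F with end
            | c0 :: cs' => fun c H =>
                match H with
                | or_introl E => eq_ind c0 P (ptree_ind_in IH c0) c E
                | or_intror H' => all_in cs' c H'
                end
            end) ts).

Fixpoint child_vertices (i : nat) (cs : seq ptree) : seq (seq nat) :=
  if cs is c :: cs' then map (cons i) (vertices c) ++ child_vertices i.+1 cs' else [::].

Lemma vertices_node ts : vertices (Node ts) = [::] :: child_vertices 0 ts.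
Proof. by []. Qed.

Lemma mem_map_cons (i j : nat) (w : seq nat) (V : seq (seq nat)) :
  (j :: w \in map (cons i) V) = (j == i) && (w \in V).
Proof.
by apply/mapP/andP => [[v Hv [-> ->]] | [/eqP -> Hw]]; last exists w.
Qed.

Lemma In_nth (T : Type) (x0 : T) (s : seq T) k : k < size s -> List.In (nth x0 s k) s.
Proof. by elim: s k => [|x s IH] [|k] //= Hk; [left | right; apply: IH]. Qed.

Lemma mem_child_vertices i ts w : (w \in child_vertices i ts) =
  if w is j :: w' then
    [&& i <= j, j - i < size ts & w' \in vertices (nth (Node [::]) ts (j - i))]
  else false.
Proof.
case: w => [|j w].
  elim: ts i => [|c cs IH] i //=.
  by rewrite mem_cat IH orbF; apply/negbTE/negP => /mapP [].
elim: ts i => [|c cs IH] i /=; first by rewrite andbF.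
rewrite mem_cat IH mem_map_cons; case: (ltngtP i j) => [Hij | // | <-] /=; first by rewrite -(subnSK Hij).
by rewrite subnn /= orbF.
Qed.

Lemma uniq_vertices t : uniq (vertices t).
Proof.
elim/ptree_ind_in: t => ts IH.
rewrite vertices_node /= mem_child_vertices /=.
elim: ts 0 IH => [|c cs IHcs] i IH //=.
rewrite cat_uniq map_inj_uniq; last by move=> x y [].
rewrite IH /=; last by left.
rewrite IHcs => [|c' Hc']; last by apply: IH; right.
rewrite andbT; apply/hasPn => -[|j w]; rewrite mem_child_vertices // => /andP [Hij _].
by apply/negP => /mapP [v _ [Ej _]]; rewrite Ej ltnn in Hij.
Qed.

Lemma vertices_take t w k : w \in vertices t -> take k w \in vertices t.
Proof.
elim/ptree_ind_in: t w k => ts IH [|j w] [|k] //; rewrite vertices_node !in_cons //=.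
rewrite !mem_child_vertices subn0 => /and3P [_ Hj Hw].
by rewrite Hj IH //; apply: In_nth.
Qed.

Lemma perm_proper_ancestors t w : w \in vertices t ->
  perm_eq [seq u <- vertices t | proper_desc u w] [seq take k w | k <- iota 0 (size w)].
Proof.
move=> Hw; apply: uniq_perm; first by rewrite filter_uniq // uniq_vertices.
  rewrite map_inj_in_uniq ?iota_uniq // => a b; rewrite !mem_iota !add0n => Ha Hb E.
  by rewrite -(size_takel (ltnW Ha)) E size_takel // ltnW.
move=> u; rewrite mem_filter /proper_desc; apply/andP/mapP => [[/andP [Hp Hne] _] | [k]].
  exists (size u); last by move: Hp; rewrite prefixE => /eqP ->.
  rewrite mem_iota add0n ltn_neqAle size_prefix // andbT.
  apply: contra Hne => /eqP Es; move: Hp; rewrite prefixE Es take_size.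
  by move/eqP ->.
rewrite mem_iota add0n => /andP [_ Hk] ->; rewrite prefix_take vertices_take //.
split=> //; apply/eqP => E.
by move: (size_takel (ltnW Hk)); rewrite E => Es; rewrite Es ltnn in Hk.
Qed.

Lemma sum_down_pairs t (F : seq nat -> seq nat -> nat) :
  \sum_(uw <- down_pairs t) F uw.1 uw.2 =
  \sum_(w <- vertices t) \sum_(k <- iota 0 (size w)) F (take k w) w.
Proof.
rewrite /down_pairs big_filter big_mkcond big_allpairs /= exchange_big /=.
rewrite big_seq [RHS]big_seq; apply: eq_bigr => w Hw.
by rewrite -big_mkcond -big_filter (perm_big _ (perm_proper_ancestors Hw)) big_map.
Qed.

Definition depth_sum (g : nat -> nat) t := \sum_(w <- vertices t) g (size w).

Lemma npairs_depth_sum t : npairs t = depth_sum id t.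
Proof.
rewrite /npairs -sum1_size (sum_down_pairs t (fun _ _ => 1)).
by apply: eq_bigr => w _; rewrite sum1_size size_iota.
Qed.

Lemma bin2_sum_rev d : \sum_(0 <= k < d) (d - k) = 'C(d.+1, 2).
Proof.
elim: d => [|d IH]; first by rewrite big_nil.
rewrite big_nat_recl // subn0 (eq_bigr (fun k => d - k)) => [|k _]; last by rewrite subSS.
by rewrite IH [RHS]binS bin1 addnC.
Qed.

Lemma sumdist_depth_sum t : sumdist t = depth_sum (fun d => 'C(d.+1, 2)) t.
Proof.
rewrite /sumdist sumnE big_map (sum_down_pairs t dist_down).
apply: eq_bigr => w _; rewrite -bin2_sum_rev /index_iota subn0 big_seq [RHS]big_seq.
by apply: eq_bigr => k; rewrite mem_iota add0n /dist_down => /ltnW /size_takel ->.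
Qed.

Lemma eq_depth_sum (g1 g2 : nat -> nat) t : g1 =1 g2 -> depth_sum g1 t = depth_sum g2 t.
Proof. by move=> Eg; apply: eq_bigr => w _; rewrite Eg. Qed.

Lemma sum_child_vertices (g : nat -> nat) i ts :
  \sum_(w <- child_vertices i ts) g (size w) = \sum_(c <- ts) depth_sum (g \o succn) c.
Proof.
elim: ts i => [|c cs IH] i /=; first by rewrite !big_nil.
by rewrite big_cat IH big_cons big_map.
Qed.

Lemma depth_sum_node g ts :
  depth_sum g (Node ts) = g 0 + \sum_(c <- ts) depth_sum (g \o succn) c.
Proof. by rewrite /depth_sum vertices_node big_cons sum_child_vertices. Qed.

Lemma tree_size_node ts : tree_size (Node ts) = (\sum_(c <- ts) tree_size c).+1.
Proof.
rewrite /tree_size -!sum1_size -/(depth_sum (fun=> 1) _) depth_sum_node add1n.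
by congr _.+1; apply: eq_bigr => c _; rewrite /depth_sum sum1_size.
Qed.

(** * Plane trees as stacks of forests *)

Definition forest_size (f : seq ptree) := \sum_(c <- f) tree_size c.
Definition stack_size (s : seq (seq ptree)) := \sum_(f <- s) forest_size f.

Lemma tree_size_forest f : tree_size (Node f) = (forest_size f).+1.
Proof. exact: tree_size_node. Qed.

(* A stack is a list of forests, top first.  Building a tree depth-first, a step either
   opens a new empty forest on top, or closes the top forest into a node appended to the
   forest below it; [stacks k m] lists the stacks reached in [k] steps with [m] nodes closed.
   The guard [k <= 2 m] discards step counts too small for [m] nodes; it also ensures that
   the stacks being closed have at least two forests. *)
Definition close_top (s : seq (seq ptree)) :=
  if s is cs :: f :: rest then (Node cs :: f) :: rest else s.

Fixpoint stacks (k m : nat) : seq (seq (seq ptree)) :=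
  if k is k'.+1 then
    if k <= 2 * m then [::]
    else map (cons [::]) (stacks k' m) ++
         (if m is m'.+1 then map close_top (stacks k' m') else [::])
  else if m is 0 then [:: [::]] else [::].

Lemma stacksS k m : 2 * m < k.+1 -> stacks k.+1 m =
  map (cons [::]) (stacks k m) ++ (if m is m'.+1 then map close_top (stacks k m') else [::]).
Proof. by move=> H /=; rewrite leqNgt H. Qed.

Lemma stacks_small k m : k <= 2 * m -> 0 < m -> stacks k m = [::].
Proof. by case: k => [|k] /= H; [case: m H | rewrite H]. Qed.

Lemma stacks0 k : stacks k 0 = [:: nseq k [::]].
Proof. by elim: k => [|k IH] //; rewrite stacksS // IH. Qed.

Lemma forest_size_nil : forest_size [::] = 0.
Proof. exact: big_nil. Qed.

Lemma forest_size_cons c f : forest_size (c :: f) = tree_size c + forest_size f.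
Proof. exact: big_cons. Qed.

Lemma In_stacks k m s : List.In s (stacks k m) <-> k = 2 * m + size s /\ stack_size s = m.
Proof.
rewrite /stack_size; elim: k m s => [|k IH] m s.
  case: m => [|m] /=; last by split => // -[]; lia.
  split => [[<- | []] | ]; first by rewrite big_nil.
  by case: s => [|f s] /= [] ? _; [left | lia].
case: (leqP k.+1 (2 * m)) => Hk.
  rewrite /= Hk; split => // -[]; case: s => [|f s] /= E; rewrite ?big_nil; lia.
rewrite stacksS // List.in_app_iff; split.
- case=> [/List.in_map_iff [s' [<- /IH [E1 E2]]] |].
    by rewrite /= big_cons forest_size_nil; split; lia.
  case: m Hk => [|m] Hk //= /List.in_map_iff [[|cs [|f rest]] [<- /IH [] /=]]; try lia.
  rewrite !big_cons forest_size_cons tree_size_forest; lia.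
- case: s => [|[|[cs] f] rest] [/= E1]; first by lia.
    rewrite big_cons forest_size_nil => E2; left.
    by apply/List.in_map_iff; exists rest; split => //; apply/IH; split; lia.
  rewrite !big_cons forest_size_cons tree_size_forest.
  case: m Hk E1 => [|m] Hk E1 E2; first by lia.
  right; apply/List.in_map_iff; exists (cs :: f :: rest); split => //; apply/IH.
  rewrite !big_cons /=; split; lia.
Qed.

Lemma size_stacks k m s : List.In s (stacks k m) -> size s = k - 2 * m.
Proof. by move/In_stacks => [-> _]; lia. Qed.

Lemma NoDup_stacks k m : List.NoDup (stacks k m).
Proof.
elim: k m => [|k IH] m; first by case: m => [|m]; repeat constructor.
case: (leqP k.+1 (2 * m)) => Hk; first by rewrite /= Hk; constructor.
rewrite stacksS //; apply: List.NoDup_app.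
- by apply: FinFun.Injective_map_NoDup => // x y [].
- case: m Hk => [|m] Hk; first by constructor.
  apply: FinFun.Injective_map_NoDup_in => // x y /size_stacks Sx /size_stacks Sy.
  case: x y Sx Sy => [|cs [|f rest]] [|cs' [|f' rest']] //= Sx Sy; try lia.
  by case=> -> -> ->.
- move=> a /List.in_map_iff [s [<- _]].
  case: m Hk => [|m] Hk //= /List.in_map_iff [s' [E /size_stacks Ss]].
  by case: s' E Ss => [|cs [|f rest]] //= [] => *; lia.
Qed.

(* A tree of a forest with [h] forests below it will hang at depth [h] in the final tree. *)
Fixpoint stack_depth_sum (g : nat -> nat) (s : seq (seq ptree)) : nat :=
  if s is f :: rest then
    \sum_(c <- f) depth_sum (fun d => g (d + size rest)) c + stack_depth_sum g rest
  else 0.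

Lemma stack_depth_sum_close_top g cs f rest :
  stack_depth_sum g (close_top [:: cs, f & rest]) =
  g (size rest) + stack_depth_sum g [:: cs, f & rest].
Proof.
rewrite /= big_cons depth_sum_node add0n !addnA; congr (_ + _ + _ + _).
by apply: eq_bigr => c _; apply: eq_depth_sum => d /=; rewrite addSnnS.
Qed.

Lemma stack_depth_sum_nseq g k : stack_depth_sum g (nseq k [::]) = 0.
Proof. by elim: k => //= k ->; rewrite big_nil. Qed.

Definition nstacks k m := size (stacks k m).
Definition depth_total g k m := \sum_(s <- stacks k m) stack_depth_sum g s.

Lemma nstacksS k m : 2 * m.+1 < k.+1 -> nstacks k.+1 m.+1 = nstacks k m.+1 + nstacks k m.
Proof. by move=> Hk; rewrite /nstacks stacksS // size_cat !size_map. Qed.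

Lemma nstacks_small k m : k <= 2 * m -> 0 < m -> nstacks k m = 0.
Proof. by move=> H1 H2; rewrite /nstacks stacks_small. Qed.

Lemma nstacks0 k : nstacks k 0 = 1.
Proof. by rewrite /nstacks stacks0. Qed.

Lemma eq_bigr_In (T : Type) (F G : T -> nat) (l : seq T) :
  (forall x, List.In x l -> F x = G x) -> \sum_(x <- l) F x = \sum_(x <- l) G x.
Proof.
elim: l => [|a l IH] H; first by rewrite !big_nil.
rewrite !big_cons IH => [|x Hx]; last by apply: H; right.
by rewrite H //; left.
Qed.

(* The last step either opens a forest, creating no vertex, or closes one at height
   [k - 2 m - 2], creating a vertex at that depth. *)
Lemma depth_totalS g k m : 2 * m.+1 < k.+1 ->
  depth_total g k.+1 m.+1 =
  depth_total g k m.+1 + (g (k - 2 * m - 2) * nstacks k m + depth_total g k m).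
Proof.
move=> Hk; rewrite /depth_total stacksS // big_cat !big_map /=.
rewrite (eq_bigr (stack_depth_sum g)) => [|s _]; last by rewrite big_nil.
congr (_ + _); rewrite /nstacks -sum1_size big_distrr -big_split /=.
apply: eq_bigr_In => s /size_stacks.
case: s => [|cs [|f rest]] Ss; try (move: Ss => /=; lia).
by rewrite stack_depth_sum_close_top muln1; congr (g _ + _); move: Ss => /=; lia.
Qed.

Lemma depth_total_small g k m : k <= 2 * m -> 0 < m -> depth_total g k m = 0.
Proof. by move=> H1 H2; rewrite /depth_total stacks_small // big_nil. Qed.

Lemma depth_total0 g k : depth_total g k 0 = 0.
Proof. by rewrite /depth_total stacks0 big_seq1 stack_depth_sum_nseq. Qed.

(** * Closed forms as binomial tails *)

Definition bin_tail N a := \sum_(a <= i < N.+1) 'C(N, i).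
Definition bin_tail2 N a := \sum_(a <= i < N.+1) bin_tail N i.

Lemma sum_tail_pascal (F G : nat -> nat) N a :
  (forall i, F i.+1 = G i + G i.+1) -> G N.+1 = 0 ->
  \sum_(a.+1 <= i < N.+2) F i = \sum_(a <= i < N.+1) G i + \sum_(a.+1 <= i < N.+1) G i.
Proof.
move=> HF HG; rewrite big_add1 /= (eq_bigr (fun i => G i + G i.+1)) // big_split /=.
congr (_ + _).
have -> : \sum_(a <= i < N.+1) G i.+1 = \sum_(a.+1 <= i < N.+2) G i by rewrite big_add1.
case: (leqP a.+1 N.+1) => Ha; first by rewrite big_nat_recr //= HG addn0.
by rewrite !big_geq // ltnW.
Qed.

Lemma bin_tail_pascal N a : bin_tail N.+1 a.+1 = bin_tail N a + bin_tail N a.+1.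
Proof. by apply: sum_tail_pascal => [i|]; rewrite (binS, bin_small) // addnC. Qed.

Lemma bin_tail_small N a : N < a -> bin_tail N a = 0.
Proof. by move=> H; rewrite /bin_tail big_geq. Qed.

Lemma bin_tail_rec N a : bin_tail N a = 'C(N, a) + bin_tail N a.+1.
Proof.
case: (leqP a N) => H; first by rewrite /bin_tail big_ltn.
by rewrite !bin_tail_small ?bin_small // ltnW.
Qed.

Lemma bin_tail2_pascal N a : bin_tail2 N.+1 a.+1 = bin_tail2 N a + bin_tail2 N a.+1.
Proof.
by apply: sum_tail_pascal => [i|]; rewrite (bin_tail_pascal, bin_tail_small).
Qed.

Lemma bin_tail2_small N a : N < a -> bin_tail2 N a = 0.
Proof. by move=> H; rewrite /bin_tail2 big_geq. Qed.

Lemma bin_tail2_rec N a : bin_tail2 N a = bin_tail N a + bin_tail2 N a.+1.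
Proof.
case: (leqP a N) => H; first by rewrite /bin_tail2 big_ltn.
by rewrite !bin_tail2_small ?bin_tail_small // ltnW.
Qed.

Lemma nstacks_ballot m h N b : N = 2 * m + h -> b = m + h ->
  nstacks N.+1 m + 'C(N, b.+1) = 'C(N, b).
Proof.
elim: m h N b => [|m IHm] h N b; first by move=> -> ->; rewrite nstacks0 bin_small ?binn //; lia.
elim: h N b => [|h IHh] [|N] [|b] HN Hb; try lia.
- have HC : nstacks N.+1 m + 'C(N, b.+2) = 'C(N, b.+1) by apply: (IHm 1); lia.
  have Hsym : 'C(N, b) = 'C(N, b.+1) by rewrite -bin_sub; [congr 'C(_, _) | ]; lia.
  rewrite nstacksS; last by lia.
  rewrite (nstacks_small (m := m.+1)) ?add0n; try lia.
  by rewrite (binS N b.+1) (binS N b); lia.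
- have HC : nstacks N.+1 m + 'C(N, b.+2) = 'C(N, b.+1) by apply: (IHm h.+2); lia.
  have HI : nstacks N.+1 m.+1 + 'C(N, b.+1) = 'C(N, b) by apply: IHh; lia.
  by rewrite nstacksS; [rewrite (binS N b.+1) (binS N b); lia | lia].
Qed.

Lemma bin2S h : 'C(h.+2, 2) = 'C(h.+1, 2) + h.+1.
Proof. by rewrite binS bin1. Qed.

Lemma depth_total_succ m h N b : N = 2 * m + h -> b = m + h ->
  depth_total succn N.+1 m = h.+1 * bin_tail N b.+1 + 'C(h.+1, 2) * 'C(N, b.+1).
Proof.
elim: m h N b => [|m IHm] h N b.
  move=> HN Hb; have HNb : N < b.+1 by lia.
  by rewrite depth_total0 bin_tail_small // (bin_small HNb) !muln0.
elim: h N b => [|h IHh] [|N] [|b] HN Hb; try lia.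
- have HC : nstacks N.+1 m + 'C(N, b.+2) = 'C(N, b.+1) by apply: (nstacks_ballot (h := 1)); lia.
  have HT : depth_total succn N.+1 m = 2 * bin_tail N b.+2 + 'C(2, 2) * 'C(N, b.+2).
    by apply: (IHm 1); lia.
  rewrite depth_totalS; last by lia.
  rewrite (@depth_total_small _ _ m.+1); try lia.
  rewrite HT (_ : N.+1 - 2 * m - 2 = 0); last by lia.
  by rewrite bin_tail_pascal (bin_tail_rec _ b.+1) -HC binn (@bin_small 1 2) //; lia.
- have HC : nstacks N.+1 m + 'C(N, b.+2) = 'C(N, b.+1).
    by apply: (nstacks_ballot (h := h.+2)); lia.
  have HT : depth_total succn N.+1 m = h.+3 * bin_tail N b.+2 + 'C(h.+3, 2) * 'C(N, b.+2).
    by apply: (IHm h.+2); lia.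
  have HI : depth_total succn N.+1 m.+1 = h.+1 * bin_tail N b.+1 + 'C(h.+1, 2) * 'C(N, b.+1).
    by apply: IHh; lia.
  rewrite depth_totalS; last by lia.
  rewrite HT HI (_ : N.+1 - 2 * m - 2 = h.+1); last by lia.
  rewrite bin_tail_pascal (binS N b.+1) (bin_tail_rec _ b.+1) -HC !bin2S; lia.
Qed.

Lemma depth_total_bin2 m h N b : N = 2 * m + h -> b = m + h ->
  depth_total (fun d => 'C(d.+2, 2)) N.+1 m =
  h.+1 * bin_tail2 N b.+1 + 'C(h.+1, 2) * bin_tail N b.+1 + 'C(h.+2, 3) * 'C(N, b.+1).
Proof.
elim: m h N b => [|m IHm] h N b.
  move=> HN Hb; have HNb : N < b.+1 by lia.
  by rewrite depth_total0 bin_tail_small // bin_tail2_small // (bin_small HNb) !muln0.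
elim: h N b => [|h IHh] [|N] [|b] HN Hb; try lia.
- have HC : nstacks N.+1 m + 'C(N, b.+2) = 'C(N, b.+1) by apply: (nstacks_ballot (h := 1)); lia.
  have HT : depth_total (fun d => 'C(d.+2, 2)) N.+1 m =
            2 * bin_tail2 N b.+2 + 'C(2, 2) * bin_tail N b.+2 + 'C(3, 3) * 'C(N, b.+2).
    by apply: (IHm 1); lia.
  rewrite depth_totalS; last by lia.
  rewrite (@depth_total_small _ _ m.+1); try lia.
  rewrite HT (_ : N.+1 - 2 * m - 2 = 0); last by lia.
  rewrite bin_tail2_pascal (bin_tail2_rec _ b.+1) (bin_tail_rec _ b.+1) -HC !binn.
  by rewrite (@bin_small 1 2) // (@bin_small 2 3) //; lia.
- have HC : nstacks N.+1 m + 'C(N, b.+2) = 'C(N, b.+1).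
    by apply: (nstacks_ballot (h := h.+2)); lia.
  have HT : depth_total (fun d => 'C(d.+2, 2)) N.+1 m =
            h.+3 * bin_tail2 N b.+2 + 'C(h.+3, 2) * bin_tail N b.+2 + 'C(h.+4, 3) * 'C(N, b.+2).
    by apply: (IHm h.+2); lia.
  have HI : depth_total (fun d => 'C(d.+2, 2)) N.+1 m.+1 =
            h.+1 * bin_tail2 N b.+1 + 'C(h.+1, 2) * bin_tail N b.+1 + 'C(h.+2, 3) * 'C(N, b.+1).
    by apply: IHh; lia.
  rewrite depth_totalS; last by lia.
  rewrite HT HI (_ : N.+1 - 2 * m - 2 = h.+1); last by lia.
  rewrite bin_tail2_pascal bin_tail_pascal (binS N b.+1) (bin_tail2_rec _ b.+1).
  by rewrite (bin_tail_rec _ b.+1) -HC (binS h.+3 2) (binS h.+2 2) !bin2S; lia.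
Qed.

Definition ptree_enum m := map (fun s => Node (head [::] s)) (stacks (2 * m).+1 m).

Lemma In_stacks_tree m s : List.In s (stacks (2 * m).+1 m) ->
  exists2 f, s = [:: f] & forest_size f = m.
Proof.
move/In_stacks => [E1 E2]; case: s E1 E2 => [|f [|g s]] /= E1; try lia.
by rewrite /stack_size big_seq1; exists f.
Qed.

Lemma In_ptree_enum m t : List.In t (ptree_enum m) <-> tree_size t = m.+1.
Proof.
split=> [/List.in_map_iff [s [<- /In_stacks_tree [f -> <-]]] | ]; first exact: tree_size_forest.
case: t => f; rewrite tree_size_forest => -[Hf].
apply/List.in_map_iff; exists [:: f]; split => //; apply/In_stacks.
by rewrite /stack_size big_seq1 /=; split; lia.
Qed.

Lemma NoDup_ptree_enum m : List.NoDup (ptree_enum m).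
Proof.
apply: FinFun.Injective_map_NoDup_in; last exact: NoDup_stacks.
by move=> x y /In_stacks_tree [f -> _] /In_stacks_tree [g -> _] [->].
Qed.

Lemma sumn_map_perm (T : Type) (F : T -> nat) l l' :
  Permutation.Permutation l l' -> sumn (map F l) = sumn (map F l').
Proof. by elim=> //= [x l1 l2 _ -> | x y l1 | l1 l2 l3 _ -> _ ->] //; rewrite addnCA. Qed.

Section TreesOfGivenSize.

Variables (m : nat) (L : seq ptree).
Hypothesis L_uniq : List.NoDup L.
Hypothesis L_size : forall t, List.In t L <-> tree_size t = m.+1.

Lemma sumn_map_ptree_enum (F : ptree -> nat) : sumn (map F L) = sumn (map F (ptree_enum m)).
Proof.
apply/sumn_map_perm/Permutation.NoDup_Permutation => // [|t]; first exact: NoDup_ptree_enum.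
by rewrite L_size In_ptree_enum.
Qed.

Lemma sum_depth_sum (g : nat -> nat) : g 0 = 0 ->
  sumn (map (depth_sum g) L) = depth_total (g \o succn) (2 * m).+1 m.
Proof.
move=> g0; rewrite sumn_map_ptree_enum sumnE /ptree_enum -map_comp big_map /depth_total.
apply: eq_bigr_In => s /In_stacks_tree [f -> _] /=.
rewrite depth_sum_node g0 addn0; apply: eq_bigr => c _.
by apply: eq_depth_sum => d; rewrite addn0.
Qed.

Lemma sum_npairs : sumn (map npairs L) = bin_tail (2 * m) m.+1.
Proof.
rewrite (eq_map npairs_depth_sum) (sum_depth_sum (g := id)) //.
by rewrite (depth_total_succ (esym (addn0 _)) (esym (addn0 _))) mul1n (@bin_small 1 2) // mul0n addn0.
Qed.

Lemma sum_sumdist : sumn (map sumdist L) = bin_tail2 (2 * m) m.+1.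
Proof.
rewrite (eq_map sumdist_depth_sum) (sum_depth_sum (g := fun d => 'C(d.+1, 2))) //.
rewrite (depth_total_bin2 (esym (addn0 _)) (esym (addn0 _))) mul1n.
by rewrite (@bin_small 1 2) // (@bin_small 2 3) // !mul0n !addn0.
Qed.
End TreesOfGivenSize.

Lemma bin_mid_sym m : 'C((2 * m).+1, m) = 'C((2 * m).+1, m.+1).
Proof. by rewrite -bin_sub; [congr 'C(_, _) | ]; lia. Qed.

Lemma bin_tail_half m : 2 * bin_tail (2 * m) m.+1 + 'C(2 * m, m) = 4 ^ m.
Proof.
elim: m => [|m IH]; first by rewrite bin_tail_small.
rewrite (_ : 2 * m.+1 = (2 * m).+2); last by lia.
rewrite !bin_tail_pascal expnS.
have := bin_tail_rec (2 * m) m; have := bin_tail_rec (2 * m) m.+1.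
have := binS (2 * m).+1 m; have := binS (2 * m) m; have := bin_mid_sym m.
lia.
Qed.

Lemma bin_mid_succ m : m.+1 * 'C((2 * m).+2, m.+1) = 2 * (2 * m).+1 * 'C(2 * m, m).
Proof.
have := mul_bin_diag (2 * m).+2 m; have := mul_bin_down (2 * m).+1 m.
rewrite (_ : (2 * m).+1 - m = m.+1) /=; last by lia.
nia.
Qed.

Lemma bin_tail2_half m : 2 * bin_tail2 (2 * m) m.+1 = m * 'C(2 * m, m).
Proof.
elim: m => [|m IH]; first by rewrite bin_tail2_small.
rewrite (_ : 2 * m.+1 = (2 * m).+2); last by lia.
rewrite !bin_tail2_pascal.
have := bin_tail2_rec (2 * m) m; have := bin_tail2_rec (2 * m) m.+1.
have := bin_tail_rec (2 * m) m; have := bin_mid_succ m.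
nia.
Qed.

Lemma mul_catalan m : m.+1 * catalan m = 'C(2 * m, m).
Proof.
rewrite /catalan -mul2n.
have := mul_bin_left (2 * m) m; rewrite (_ : 2 * m - m = m); last by lia.
move=> H; have E : 'C(2 * m, m) = m.+1 * ('C(2 * m, m) - 'C(2 * m, m.+1)).
  by rewrite mulnBr; lia.
by rewrite {1}E mulKn // -E.
Qed.

Lemma dfactS n : dfact n.+1 = n.+1 * dfact n.-1.
Proof. by case: n. Qed.

Lemma dfact_gt0 n : 0 < dfact n.
Proof. by elim/ltn_ind: n => -[|n] IH //; rewrite dfactS muln_gt0 IH // ltnS leq_pred. Qed.

Lemma dfact_double m : dfact (2 * m) = 2 ^ m * m`!.
Proof.
elim: m => [|m IH] //; rewrite (_ : 2 * m.+1 = (2 * m).+2); last by lia.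
by rewrite dfactS IH expnS factS; lia.
Qed.

Lemma dfactSM n : dfact n.+1 * dfact n = n.+1`!.
Proof. by elim: n => [|n IH] //; rewrite dfactS factS -IH /=; lia. Qed.

Lemma bin2_double n : 2 * 'C(n, 2) = n * n.-1.
Proof. by rewrite bin2 mul2n even_halfK // oddM; case: n => //= n; rewrite andNb. Qed.

Section FactorialForms.
Import mathcomp.algebra_tactics.ring.

Lemma sumdist_catalan m : bin_tail2 (2 * m) m.+1 = 'C(m.+1, 2) * catalan m.
Proof.
apply/eqP; rewrite -(eqn_pmul2l (_ : 0 < 2)) //; apply/eqP.
by rewrite bin_tail2_half mulnA bin2_double /= -mul_catalan; ring.
Qed.

Lemma sumdist_fact p : bin_tail2 (2 * p.+1) p.+2 * (p`!) ^ 2 = (2 * p).+1`!.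
Proof.
have := bin_tail2_half p.+1; have := @bin_fact (2 * p.+1) p.+1 ltac:(lia).
have -> : 2 * p.+1 - p.+1 = p.+1 by lia.
have -> : 2 * p.+1 = (2 * p).+2 by lia.
rewrite (factS p) (factS (2 * p).+1).
set D := bin_tail2 _ _; set C := 'C(_, _); set f := p`!; set g := (2 * p).+1`! => HF HD.
apply/eqP; rewrite -(eqn_pmul2l (_ : 0 < 2 * p.+1 ^ 2)) ?muln_gt0 //; apply/eqP.
transitivity (2 * D * (p.+1 * f * (p.+1 * f))); first by ring.
transitivity (p.+1 * (C * (p.+1 * f * (p.+1 * f)))); first by rewrite HD; ring.
by rewrite HF; ring.
Qed.

Lemma dfact_bin_mid m :
  dfact (2 * m.+1) * 'C(2 * m.+1, m.+1) = 4 ^ m.+1 * dfact (2 * m).+1.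
Proof.
have := dfact_double m.+1; have := dfactSM (2 * m).+1.
have := @bin_fact (2 * m.+1) m.+1 ltac:(lia).
have -> : 2 * m.+1 - m.+1 = m.+1 by lia.
have -> : 2 * m.+1 = (2 * m).+2 by lia.
set A := dfact _; set B := dfact _; set C := 'C(_, _); set f := m.+1`! => HF HM HA.
apply/eqP; rewrite -(eqn_pmul2r (_ : 0 < f * f)) ?muln_gt0 ?fact_gt0 //; apply/eqP.
transitivity (A * (C * (f * f))); first by ring.
rewrite HF -HM HA (_ : 4 = 2 * 2) // expnMn; ring.
Qed.
End FactorialForms.

(** * Wallis' inequalities and the asymptotics *)

Open Scope R_scope.

Section Wallis.
Import Coquelicot.Coquelicot.

Definition wallis_integral (k : nat) : R := RInt (fun x => sin x ^ k) 0 (PI / 2).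

Lemma ex_RInt_sin_pow k : ex_RInt (fun x => sin x ^ k) 0 (PI / 2).
Proof.
apply: ex_RInt_continuous => x _.
apply: (@ex_derive_continuous R_AbsRing R_NormedModule); auto_derive; auto.
Qed.

Lemma wallis_integral0 : wallis_integral 0 = PI / 2.
Proof. rewrite /wallis_integral /= RInt_const /scal /= /mult /=; ring. Qed.

Lemma wallis_integral1 : wallis_integral 1 = 1.
Proof.
apply: is_RInt_unique; apply: (is_RInt_ext sin) => [x _|]; first by rewrite /=; ring.
have -> : 1 = minus (- cos (PI / 2)) (- cos 0).
  by rewrite cos_PI2 cos_0 /minus /plus /opp /=; ring.
apply: (is_RInt_derive (fun x => - cos x)) => x _.
- by auto_derive; auto; ring.
- apply: (@ex_derive_continuous R_AbsRing R_NormedModule); auto_derive; auto.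
Qed.

(* [(- cos x * sin x ^ (k + 1))' = (k + 2) sin x ^ (k + 2) - (k + 1) sin x ^ k]. *)
Lemma wallis_integral_rec k :
  INR k.+2 * wallis_integral k.+2 = INR k.+1 * wallis_integral k.
Proof.
set F := fun x => - cos x * sin x ^ k.+1.
have HF : is_RInt (fun x => INR k.+2 * sin x ^ k.+2 - INR k.+1 * sin x ^ k)
            0 (PI / 2) (minus (F (PI / 2)) (F 0)).
  apply: is_RInt_derive => x _; last first.
    apply: (@ex_derive_continuous R_AbsRing R_NormedModule); auto_derive; auto.
  rewrite /F; auto_derive; auto.
  have -> : forall u, - cos x * (1 * cos x * u) = - (cos x * cos x) * u by move=> u; ring.
  have -> : cos x * cos x = 1 - sin x * sin x by have := sin2_cos2 x; rewrite /Rsqr; lra.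
  rewrite -/(INR k.+1) !S_INR /=; ring.
have HF0 : minus (F (PI / 2)) (F 0) = 0.
  by rewrite /F cos_PI2 cos_0 sin_0 pow_i; [rewrite /minus /plus /opp /=; ring | lia].
rewrite HF0 in HF.
have HW := is_RInt_minus _ _ _ _ _ _
  (is_RInt_scal _ _ _ (INR k.+2) _ (RInt_correct _ _ _ (ex_RInt_sin_pow k.+2)))
  (is_RInt_scal _ _ _ (INR k.+1) _ (RInt_correct _ _ _ (ex_RInt_sin_pow k))).
have := is_RInt_unique _ _ _ _ HW; rewrite (is_RInt_unique _ _ _ _ HF).
rewrite /wallis_integral /minus /plus /opp /scal /= /mult /=; lra.
Qed.

Lemma wallis_integral_decr k : wallis_integral k.+1 <= wallis_integral k.
Proof.
apply: RInt_le; try apply: ex_RInt_sin_pow; first by have := PI_RGT_0; lra.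
move=> x [H0 H1] /=.
have Hs : 0 <= sin x by apply: sin_ge_0; have := PI_RGT_0; lra.
have Hs1 := SIN_bound x.
have := pow_le _ k Hs; nra.
Qed.

End Wallis.

Lemma INR_addn m n : INR (m + n) = INR m + INR n.
Proof. exact: plus_INR. Qed.

Lemma INR_muln m n : INR (m * n) = INR m * INR n.
Proof. exact: mult_INR. Qed.

Lemma INR_double m : INR (2 * m) = 2 * INR m.
Proof. by rewrite INR_muln /=; ring. Qed.

Definition wallis_ratio (m : nat) : R := INR (dfact (2 * m)) / INR (dfact (2 * m).-1).

Lemma INR_dfact_gt0 n : 0 < INR (dfact n).
Proof. by apply: lt_0_INR; apply/ltP; apply: dfact_gt0. Qed.

Lemma wallis_ratio0 : wallis_ratio 0 = 1.
Proof. by rewrite /wallis_ratio /=; field. Qed.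

Lemma wallis_ratioS m :
  wallis_ratio m.+1 = wallis_ratio m * (2 * INR m + 2) / (2 * INR m + 1).
Proof.
rewrite /wallis_ratio mulnS !dfactS /= !mult_INR !S_INR mult_INR /=.
have := INR_dfact_gt0 (2 * m); have := INR_dfact_gt0 (2 * m).-1; have := pos_INR m.
by move=> *; field; lra.
Qed.

Lemma wallis_ratio_gt0 m : 0 < wallis_ratio m.
Proof.
rewrite /wallis_ratio; have := INR_dfact_gt0 (2 * m); have := INR_dfact_gt0 (2 * m).-1.
by move=> *; apply: Rdiv_lt_0_compat.
Qed.

Lemma wallis_integral_even m : wallis_integral (2 * m) * wallis_ratio m = PI / 2.
Proof.
elim: m => [|m IH]; first by rewrite wallis_integral0 wallis_ratio0; ring.
have := wallis_integral_rec (2 * m).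
rewrite !S_INR INR_double (_ : (2 * m).+2 = 2 * m.+1)%N; last by lia.
move=> HR; have := pos_INR m => Hm.
rewrite wallis_ratioS -IH.
rewrite (_ : _ * _ = (2 * INR m + 1 + 1) * wallis_integral (2 * m.+1) * wallis_ratio m
                     / (2 * INR m + 1)); last by field; lra.
by rewrite HR; field; lra.
Qed.

Lemma wallis_integral_odd m :
  INR (2 * m).+1 * wallis_integral (2 * m).+1 = wallis_ratio m.
Proof.
elim: m => [|m IH]; first by rewrite wallis_integral1 wallis_ratio0 /=; ring.
rewrite (_ : (2 * m.+1).+1 = (2 * m).+3)%N; last by lia.
rewrite wallis_integral_rec wallis_ratioS -IH !S_INR INR_double; have := pos_INR m.
by move=> Hm; field; lra.
Qed.

Lemma sq_le_of_div_le a b c : 0 < a -> 0 < b -> a / b <= c / a -> a ^ 2 <= b * c.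
Proof.
move=> Ha Hb H; have Hab : 0 <= a * b by nra.
have := Rmult_le_compat_r (a * b) _ _ Hab H.
have -> : a / b * (a * b) = a ^ 2 by field; lra.
by have -> : c / a * (a * b) = b * c by field; lra.
Qed.

Lemma sq_ge_of_div_le a b c : 0 < a -> 0 < b -> c / a <= a / b -> b * c <= a ^ 2.
Proof.
move=> Ha Hb H; have Hab : 0 <= a * b by nra.
have := Rmult_le_compat_r (a * b) _ _ Hab H.
have -> : a / b * (a * b) = a ^ 2 by field; lra.
by have -> : c / a * (a * b) = b * c by field; lra.
Qed.

Lemma wallis_integral_oddE m :
  wallis_integral (2 * m).+1 = wallis_ratio m / (2 * INR m + 1).
Proof.
have := wallis_integral_odd m; rewrite S_INR INR_double; have := pos_INR m.
by move=> Hm <-; field; lra.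
Qed.

Lemma wallis_integral_evenE m : wallis_integral (2 * m) = PI / 2 / wallis_ratio m.
Proof.
have := wallis_integral_even m; have := wallis_ratio_gt0 m.
by move=> Hr <-; field; lra.
Qed.

Lemma wallis_ratio_sq_le m : wallis_ratio m ^ 2 <= PI * (INR m + 1 / 2).
Proof.
have := wallis_integral_decr (2 * m).
rewrite wallis_integral_oddE wallis_integral_evenE => H.
rewrite (_ : PI * _ = (2 * INR m + 1) * (PI / 2)); last by field.
apply: sq_le_of_div_le H; first exact: wallis_ratio_gt0.
by have := pos_INR m; lra.
Qed.

Lemma wallis_ratio_sq_ge m : PI * INR m <= wallis_ratio m ^ 2.
Proof.
case: m => [|m]; first by rewrite /= Rmult_0_r; apply: pow2_ge_0.
have := wallis_integral_decr (2 * m).+1.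
rewrite (_ : (2 * m).+2 = 2 * m.+1)%N; last by lia.
rewrite wallis_integral_oddE wallis_integral_evenE.
rewrite (_ : wallis_ratio m / _ = wallis_ratio m.+1 / (2 * INR m + 2)); last first.
  by rewrite wallis_ratioS; have := pos_INR m; move=> ?; field; lra.
move=> H; rewrite (_ : PI * _ = (2 * INR m + 2) * (PI / 2)); last by rewrite S_INR; field.
apply: sq_ge_of_div_le H; first exact: wallis_ratio_gt0.
by have := pos_INR m; lra.
Qed.

Lemma Rabs_le_div (x d K : R) : 0 < d -> Rabs (x * d) <= K -> Rabs x <= K / d.
Proof.
move=> Hd H; apply: (Rmult_le_reg_r d) => //.
rewrite /Rdiv Rmult_assoc Rinv_l ?Rmult_1_r; last by lra.
by rewrite -{1}(Rabs_pos_eq d) -?Rabs_mult //; lra.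
Qed.

(* Here [s = sqrt P], [a = sqrt (n - 1)], [q = sqrt n] and [r] is the Wallis ratio.  The
   defect [t = r - s a] lies in [0, s / (4 a)], so [a^2 / (r - 1) - a / s - 1 / P] has the
   small numerator [1 - t - a s t] over [P (r - 1) >= a]; moreover [q - a <= 1 / (2 a)]. *)
Lemma wallis_closed_form_estimate {P s a q r : R} :
  3 < P <= 4 -> 0 < s -> s * s = P -> 1 <= a -> 0 < q -> q * q = a * a + 1 ->
  0 < r -> P * (a * a) <= r * r <= P * (a * a + 1 / 2) ->
  Rabs (a * a / (r - 1) - q / s - 1 / P) <= 8 / q.
Proof.
move=> HP Hs HsP Ha Hq Hqa Hr [Hr1 Hr2].
have Hs2 : 17 / 10 <= s <= 2 by nra.
have Hsa : s * a <= r by nra.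
have Hr1' : 1 < r by nra.
have Hr4 : 4 * a * r <= s * (4 * a * a + 1).
  apply: Rsqr_incr_0_var; last by nra.
  rewrite /Rsqr (_ : _ * (s * _) = P * ((4 * a * a + 1) * (4 * a * a + 1))); last by rewrite -HsP; ring.
  nra.
set t := r - s * a.
have Ht : 0 <= t /\ a * t <= s / 4 by rewrite /t; split; nra.
have Hden : a <= P * (r - 1) by nra.
have HF : Rabs (a * a / (r - 1) - a / s - 1 / P) <= 3 / a.
  apply: (Rle_trans _ (3 / (P * (r - 1)))); last first.
    by apply: Rmult_le_compat_l; [lra | apply: Rinv_le_contravar; lra].
  apply: Rabs_le_div; first by lra.
  rewrite (_ : _ * _ = 1 - t - a * s * t); last by rewrite /t -HsP; field; lra.
  by apply: Rabs_le; nra.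
have Hqa2 : 0 <= q - a <= 1 / (2 * a).
  have Hqa1 : a <= q by nra.
  split; first by lra.
  apply: (Rmult_le_reg_r (2 * a)); first by lra.
  rewrite /Rdiv Rmult_1_l Rinv_l; nra.
have H8 : 4 / a <= 8 / q.
  rewrite (_ : 8 / q = 4 / (q / 2)); last by field; lra.
  by apply: Rmult_le_compat_l; [lra | apply: Rinv_le_contravar; nra].
rewrite (_ : _ - _ = (a * a / (r - 1) - a / s - 1 / P) - (q - a) / s); last by field; lra.
apply: (Rle_trans _ _ _ (Rabs_triang _ _)); rewrite Rabs_Ropp.
have HG : Rabs ((q - a) / s) <= 1 / a.
  have Hinv : 0 < / s <= 1.
    by split; [apply: Rinv_0_lt_compat | rewrite -Rinv_1; apply: Rinv_le_contravar]; lra.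
  have : 1 / (2 * a) <= 1 / a by apply: Rmult_le_compat_l; [lra | apply: Rinv_le_contravar; lra].
  rewrite Rabs_pos_eq /Rdiv in Hqa2 * => *; nra.
have : 3 / a + 1 / a = 4 / a by field; lra.
lra.
Qed.

Lemma closed_formE m : closed_form m.+2 = INR m.+1 / (wallis_ratio m.+1 - 1).
Proof.
rewrite /closed_form /wallis_ratio.
have -> : (m.+2 - 1 = m.+1)%N by lia.
have -> : (2 * m.+2 - 2 = 2 * m.+1)%N by lia.
by have -> : (2 * m.+2 - 3 = (2 * m.+1).-1)%N by lia.
Qed.

Lemma closed_form_asymptotics : exists C : R, forall n : nat, (2 <= n)%N ->
  Rabs (closed_form n - sqrt (INR n / PI) - / PI) <= C / sqrt (INR n).
Proof.
exists 8 => -[|[|m]] // _; rewrite closed_formE.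
have HPI : 3 < PI <= 4 by have := PI2_3_2; have := PI_4; lra.
have Hm := pos_INR m.
have Ha : 1 <= sqrt (INR m.+1).
  by rewrite -sqrt_1; apply: sqrt_le_1_alt; rewrite S_INR; lra.
have Hq : 0 < sqrt (INR m.+2) by apply: sqrt_lt_R0; rewrite !S_INR; lra.
have := wallis_closed_form_estimate HPI (sqrt_lt_R0 PI ltac:(lra))
          (sqrt_sqrt PI ltac:(lra)) Ha Hq _ (wallis_ratio_gt0 m.+1).
have Ha2 := sqrt_sqrt (INR m.+1) (pos_INR _).
have Hq2 := sqrt_sqrt (INR m.+2) (pos_INR _).
rewrite Ha2 Hq2 sqrt_div_alt /Rdiv ?Rmult_1_l; last by lra.
apply; first by rewrite !S_INR; ring.
have := wallis_ratio_sq_ge m.+1; have := wallis_ratio_sq_le m.+1; rewrite /=.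
by move=> *; split; nra.
Qed.

Lemma ratio_eq_closed_form (D P c F a b k : R) :
  2 * D = k * c -> 2 * P + c = F -> a * c = F * b -> 0 < P -> 0 < b -> 0 < c ->
  D / P = k / (a / b - 1).
Proof.
move=> HD HF Hac HP Hb Hc.
have Ha : a = F * b / c by apply: (Rmult_eq_reg_r c); [rewrite Hac; field | ]; lra.
have -> : a / b - 1 = 2 * P / c by rewrite Ha -HF; field; lra.
by rewrite (_ : D = k * c / 2); [field | ]; lra.
Qed.

Close Scope R_scope.

Lemma down_path_totals n L : 2 <= n -> List.NoDup L ->
  (forall t : ptree, List.In t L <-> tree_size t = n) ->
  let P := sumn (map npairs L) in
  let D := sumn (map sumdist L) in
  [/\ P.*2 = 4 ^ (n - 1) - 'C(2 * n - 2, n - 1),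
      D * ((n - 2)`!) ^ 2 = (2 * n - 3)`!,
      D = 'C(n, 2) * catalan (n - 1)
    & expected_len D P = closed_form n].
Proof.
case: n => [|[|p]] // _ L_uniq L_size P D.
have HP : P = bin_tail (2 * p.+1) p.+2 by exact: sum_npairs.
have HD : D = bin_tail2 (2 * p.+1) p.+2 by exact: sum_sumdist.
have -> : p.+2 - 1 = p.+1 by lia.
have -> : 2 * p.+2 - 2 = 2 * p.+1 by lia.
have -> : p.+2 - 2 = p by lia.
have -> : 2 * p.+2 - 3 = (2 * p).+1 by lia.
have Hc : 0 < 'C(2 * p.+1, p.+1) by rewrite bin_gt0; lia.
split; first by have := bin_tail_half p.+1; rewrite HP -mul2n; lia.
- by rewrite HD sumdist_fact.
- by rewrite HD sumdist_catalan.
rewrite /expected_len closed_formE /wallis_ratio.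
have -> : (2 * p.+1).-1 = (2 * p).+1 by lia.
apply: (@ratio_eq_closed_form _ _ (INR 'C(2 * p.+1, p.+1)) (INR (4 ^ p.+1))).
- by rewrite -INR_double -INR_muln HD bin_tail2_half.
- by rewrite -INR_double -INR_addn HP bin_tail_half.
- by rewrite -!INR_muln dfact_bin_mid.
- by apply/lt_0_INR/ltP; rewrite HP bin_tail_rec ltn_addr // bin_gt0; lia.
- exact: INR_dfact_gt0.
- exact/lt_0_INR/ltP.
Qed.

Theorem mainTheorem8 :
  (forall (n : nat) (L : seq ptree),
      (2 <= n)%N ->
      List.NoDup L ->
      (forall t : ptree, List.In t L <-> tree_size t = n) ->
      let P := sumn (map npairs L) in
      let D := sumn (map sumdist L) in
      [/\ P.*2 = 4 ^ (n - 1) - 'C(2 * n - 2, n - 1),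
          D * ((n - 2)`!) ^ 2 = (2 * n - 3)`!,
          D = 'C(n, 2) * catalan (n - 1)
        & expected_len D P = closed_form n])
  /\
  (exists C : R, forall n : nat, (2 <= n)%N ->
      Rle (Rabs (Rminus (Rminus (closed_form n) (sqrt (Rdiv (INR n) PI))) (Rinv PI)))
          (Rdiv C (sqrt (INR n)))).
Proof. by split; [exact: down_path_totals | exact: closed_form_asymptotics]. Qed.
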